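(* Let $\mathbf{QL}_1\subseteq\mathbf{QL}_2$ be intermediate predicate logics with the same propositional fragment $\mathbf{L}$. Suppose Herbrand's theorem for existential formulas holds in $\mathbf{QL}_2$. Then for every existential formula $A$, $\vdash_{\mathbf{QL}_1}A$ iff $\vdash_{\mathbf{QL}_2}A$. If moreover $\mathbf{QL}_1$ proves all instances of $\forall x(C(x)\lor B)\to(\forall x\,C(x)\lor B)$ ($x$ not free in $B$), then the same equivalence holds for every prenex formula $A$.
   Context: Intermediate predicate logic: a set of first-order formulas containing intuitionistic predicate logic, contained in classical predicate logic, closed under substitution, modus ponens and the quantifier rules (from $B\to A(x)$ infer $B\to\forall y\,A(y)$; from $A(x)\to B$ infer $\exists y\,A(y)\to B$; $x$ not free in the conclusion). The propositional fragment is the set of its propositional formulas; $\vdash_{\mathbf{L}}$ on quantifier-free formulas means derivability by substitution instances of theorems of $\mathbf{L}$ and modus ponens. An existential formula is one of the form $\exists x_1\dots\exists x_n\,A'(x_1,\dots,x_n)$ with $A'$ quantifier-free. Herbrand's theorem for existential formulas holds in $\mathbf{QL}_2$ if whenever $\vdash_{\mathbf{QL}_2}\exists x_1\dots\exists x_n\,A'(x_1,\dots,x_n)$ ($A'$ quantifier-free), there are terms $t_{ij}$ with $\vdash_{\mathbf{L}}\bigvee_{j=1}^k A'(t_{1j},\dots,t_{nj})$. For a prenex formula $A$, its Herbrand form $H(A)$ is the existential formula obtained by deleting each universal quantifier $\forall y$ and replacing $y$ by $f_y(x_1,\dots,x_k)$, where $f_y$ is a new function symbol and $x_1,\dots,x_k$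 are the existentially quantified variables whose quantifiers precede $\forall y$. *)

From Stdlib Require Import List Arith.
Import ListNotations.

(* A function symbol
   is identified by its name together with its arity (= length of the
   argument list); constants are 0-ary function symbols. *)
Inductive term : Type :=
| tvar : nat -> term
| tfun : nat -> list term -> term.

(* A predicate symbol is
   identified by its name together with its arity; 0-ary predicate symbols
   are the propositional variables.  Bound variables are de Bruijn indices:
   [All A] / [Ex A] bind index 0 of [A]. *)
Inductive form : Type :=
| Bot : form
| Atom : nat -> list term -> form
| And : form -> form -> form
| Or : form -> form -> form
| Imp : form -> form -> form
| All : form -> form
| Ex : form -> form.

Definition Neg (A : form) : form := Imp A Bot.

Fixpoint tsubst (s : nat -> term) (t : term) : term :=
  match t with
  | tvar n => s n
  | tfun f ts => tfun f (map (tsubst s) ts)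
  end.

Definition up (s : nat -> term) : nat -> term :=
  fun n => match n with
           | 0 => tvar 0
           | S m => tsubst (fun k => tvar (S k)) (s m)
           end.

Fixpoint fsubst (s : nat -> term) (A : form) : form :=
  match A with
  | Bot => Bot
  | Atom p ts => Atom p (map (tsubst s) ts)
  | And B C => And (fsubst s B) (fsubst s C)
  | Or B C => Or (fsubst s B) (fsubst s C)
  | Imp B C => Imp (fsubst s B) (fsubst s C)
  | All B => All (fsubst (up s) B)
  | Ex B => Ex (fsubst (up s) B)
  end.

(* shift all free variables by one (makes index 0 not free) *)
Definition lift (A : form) : form := fsubst (fun n => tvar (S n)) A.

(* A(t): instantiate the variable bound by an outer quantifier by t *)
Definition inst0 (t : term) (A : form) : form :=
  fsubst (fun n => match n with 0 => t | S m => tvar m end) A.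

(* Substitution of formulas for predicate symbols.  [s p n] is the formula
   substituted for the n-ary predicate symbol p: in it the variables
   0..n-1 stand for the n arguments, and variable n+j stands for the free
   (global) variable j.  [k] is the number of binders passed so far. *)
Fixpoint psubst_at (s : nat -> nat -> form) (k : nat) (A : form) : form :=
  match A with
  | Bot => Bot
  | Atom p ts =>
      let n := length ts in
      fsubst (fun i => if i <? n then nth i ts (tvar 0) else tvar (i - n + k))
             (s p n)
  | And B C => And (psubst_at s k B) (psubst_at s k C)
  | Or B C => Or (psubst_at s k B) (psubst_at s k C)
  | Imp B C => Imp (psubst_at s k B) (psubst_at s k C)
  | All B => All (psubst_at s (S k) B)
  | Ex B => Ex (psubst_at s (S k) B)
  end.

Definition psubst (s : nat -> nat -> form) (A : form) : form := psubst_at s 0 A.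

(* Hilbert calculus: intuitionistic predicate logic (cl = false) and
   classical predicate logic (cl = true, adds excluded middle). *)
Inductive prov (cl : bool) : form -> Prop :=
| ax_K A B : prov cl (Imp A (Imp B A))
| ax_S A B C : prov cl (Imp (Imp A (Imp B C)) (Imp (Imp A B) (Imp A C)))
| ax_andE1 A B : prov cl (Imp (And A B) A)
| ax_andE2 A B : prov cl (Imp (And A B) B)
| ax_andI A B : prov cl (Imp A (Imp B (And A B)))
| ax_orI1 A B : prov cl (Imp A (Or A B))
| ax_orI2 A B : prov cl (Imp B (Or A B))
| ax_orE A B C : prov cl (Imp (Imp A C) (Imp (Imp B C) (Imp (Or A B) C)))
| ax_bot A : prov cl (Imp Bot A)
| ax_all A t : prov cl (Imp (All A) (inst0 t A))
| ax_ex A t : prov cl (Imp (inst0 t A) (Ex A))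
| ax_lem A : cl = true -> prov cl (Or A (Neg A))
| r_mp A B : prov cl (Imp A B) -> prov cl A -> prov cl B
| r_all B A : prov cl (Imp (lift B) A) -> prov cl (Imp B (All A))
| r_ex A B : prov cl (Imp A (lift B)) -> prov cl (Imp (Ex A) B).

Definition IQC : form -> Prop := prov false.
Definition CQC : form -> Prop := prov true.

(* Intermediate predicate logic, given as the set of its theorems. *)
Definition intermediate (QL : form -> Prop) : Prop :=
  (forall A, IQC A -> QL A) /\
  (forall A, QL A -> CQC A) /\
  (forall s A, QL A -> QL (psubst s A)) /\
  (forall A B, QL (Imp A B) -> QL A -> QL B) /\
  (* from B -> A(x) infer B -> forall y A(y), x not free in B *)
  (forall A B, QL (Imp (lift B) A) -> QL (Imp B (All A))) /\
  (* from A(x) -> B infer exists y A(y) -> B, x not free in B *)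
  (forall A B, QL (Imp A (lift B)) -> QL (Imp (Ex A) B)).

Fixpoint qfree (A : form) : Prop :=
  match A with
  | Bot | Atom _ _ => True
  | And B C | Or B C | Imp B C => qfree B /\ qfree C
  | All _ | Ex _ => False
  end.

Fixpoint propf (A : form) : Prop :=
  match A with
  | Bot => True
  | Atom _ ts => ts = []
  | And B C | Or B C | Imp B C => propf B /\ propf C
  | All _ | Ex _ => False
  end.

Definition same_prop_fragment (QL1 QL2 : form -> Prop) : Prop :=
  forall A, propf A -> (QL1 A <-> QL2 A).

(* |-_L on quantifier-free formulas, L the propositional fragment of QL:
   derivability by substitution instances (propositional variables replaced
   by quantifier-free formulas) of theorems of L, and modus ponens. *)
Inductive derivL (QL : form -> Prop) : form -> Prop :=
| dL_inst (s : nat -> nat -> form) (B : form) :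
    propf B -> QL B -> (forall p, qfree (s p 0)) -> derivL QL (psubst s B)
| dL_mp A B : derivL QL (Imp A B) -> derivL QL A -> derivL QL B.

Fixpoint exs (n : nat) (A : form) : form :=
  match n with 0 => A | S m => Ex (exs m A) end.

Definition existential (A : form) : Prop :=
  exists n A', qfree A' /\ A = exs n A'.

Inductive prenex : form -> Prop :=
| prenex_qf A : qfree A -> prenex A
| prenex_all A : prenex A -> prenex (All A)
| prenex_ex A : prenex A -> prenex (Ex A).

(* instantiate the n = length ts outermost-bound variables of a matrix
   (de Bruijn indices 0..n-1) by the terms ts *)
Definition inst_list (ts : list term) : nat -> term :=
  fun i => if i <? length ts then nth i ts (tvar 0) else tvar (i - length ts).

Fixpoint bigOr (l : list form) : form :=
  match l with
  | [] => Bot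
  | [A] => A
  | A :: l' => Or A (bigOr l')
  end.

Definition herbrand_ex (QL : form -> Prop) : Prop :=
  forall (n : nat) (A' : form), qfree A' -> QL (exs n A') ->
    exists tss : list (list term),
      tss <> [] /\ Forall (fun ts => length ts = n) tss /\
      derivL QL (bigOr (map (fun ts => fsubst (inst_list ts) A') tss)).

Definition shift_schema (C B : form) : form :=
  Imp (All (Or C (lift B))) (Or (All C) B).

(* For an existential formula, the Herbrand disjunction that QL2 yields is
   derived in the common propositional fragment L, hence holds in QL1, and each
   of its disjuncts implies the formula intuitionistically.

   For a prenex formula A, QL2 proves its Herbrand form, so L derives a
   disjunction of instances of the matrix whose universal variables are
   Skolem terms.  Replacing every Skolem term by its own fresh variable keeps
   this an L-derivation, now valid in QL1, and A is rebuilt from it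
   disjunct by disjunct, peeling instantiated quantifiers from the inside:
   an existential one is restored by existential introduction; otherwise the
   Skolem term of maximal size among the innermost instances occurs in no
   other disjunct, so its variable can be generalized and the universal
   quantifier moved into its disjunct by the shift schema
   forall x (C x \/ B) -> forall x C x \/ B.  Each step shortens the
   instantiated prefixes, so the process ends with A itself. *)

From Stdlib Require Import List Arith Lia FunctionalExtensionality ClassicalEpsilon Classical.
Import ListNotations.

Fixpoint term_nested_ind (P : term -> Prop)
  (Hvar : forall n, P (tvar n))
  (Hfun : forall f ts, Forall P ts -> P (tfun f ts)) (t : term) : P t :=
  match t with
  | tvar n => Hvar n
  | tfun f ts => Hfun f ts
      ((fix go (l : list term) : Forall P l :=
          match l with
          | [] => Forall_nil _
          | u :: l' => Forall_cons _ (term_nested_ind P Hvar Hfun u) (go l')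
          end) ts)
  end.

Fixpoint tvars (t : term) : list nat :=
  match t with
  | tvar n => [n]
  | tfun _ ts => concat (map tvars ts)
  end.

Lemma in_concat_map {A B} (f : A -> list B) (l : list A) (y : B) :
  In y (concat (map f l)) <-> exists x, In x l /\ In y (f x).
Proof.
  rewrite in_concat. split.
  - intros [l' [Hl' Hy]]. apply in_map_iff in Hl' as [x [<- Hx]]. eauto.
  - intros [x [Hx Hy]]. exists (f x). split; auto. apply in_map; auto.
Qed.

Lemma tsubst_ext_tvars t s s' :
  (forall i, In i (tvars t) -> s i = s' i) -> tsubst s t = tsubst s' t.
Proof.
  induction t as [n | f ts IH] using term_nested_ind; intros Hs; simpl in *.
  - auto.
  - f_equal. apply map_ext_in. intros u Hu. rewrite Forall_forall in IH.
    apply IH; auto. intros i Hi. apply Hs, in_concat_map. eauto.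
Qed.

Lemma tsubst_comp t s r :
  tsubst s (tsubst r t) = tsubst (fun i => tsubst s (r i)) t.
Proof.
  induction t as [n | f ts IH] using term_nested_ind; simpl; auto.
  f_equal. rewrite map_map. apply map_ext_in. intros u Hu.
  rewrite Forall_forall in IH. auto.
Qed.

Lemma tsubst_var t : tsubst tvar t = t.
Proof.
  induction t as [n | f ts IH] using term_nested_ind; simpl; auto.
  f_equal. rewrite <- map_id. apply map_ext_Forall. exact IH.
Qed.

Lemma up_comp s r i : up (fun j => tsubst s (r j)) i = tsubst (up s) (up r i).
Proof.
  destruct i; simpl; auto. rewrite !tsubst_comp. reflexivity.
Qed.

Lemma fsubst_comp A s r :
  fsubst s (fsubst r A) = fsubst (fun i => tsubst s (r i)) A.
Proof.
  revert s r.
  induction A; intros s r; simpl; f_equal; auto.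
  - rewrite map_map. apply map_ext. intros; apply tsubst_comp.
  - rewrite IHA. f_equal. extensionality i. symmetry; apply up_comp.
  - rewrite IHA. f_equal. extensionality i. symmetry; apply up_comp.
Qed.

Lemma fsubst_var A : fsubst tvar A = A.
Proof.
  assert (Hup : up tvar = tvar) by (extensionality i; destruct i; reflexivity).
  induction A; simpl; f_equal; rewrite ?Hup; auto.
  rewrite <- map_id. apply map_ext. apply tsubst_var.
Qed.

Lemma fsubst_var_ext A s : (forall i, s i = tvar i) -> fsubst s A = A.
Proof.
  intros Hs. replace s with tvar by (extensionality i; auto). apply fsubst_var.
Qed.

Lemma fsubst_bigOr s l : fsubst s (bigOr l) = bigOr (map (fsubst s) l).
Proof.
  induction l as [|A [|B l] IH]; simpl in *; auto. rewrite IH; auto.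
Qed.

Lemma qfree_fsubst A s : qfree A -> qfree (fsubst s A).
Proof. induction A; simpl; tauto. Qed.

Definition scons (t : term) (s : nat -> term) : nat -> term :=
  fun i => match i with 0 => t | S k => s k end.

Lemma scons_eta s : scons (s 0) (fun k => s (S k)) = s.
Proof. extensionality i. destruct i; reflexivity. Qed.

Lemma inst0_fsubst_up t r A : inst0 t (fsubst (up r) A) = fsubst (scons t r) A.
Proof.
  unfold inst0. rewrite fsubst_comp. f_equal. extensionality i.
  destruct i; simpl; auto. rewrite tsubst_comp. apply tsubst_var.
Qed.

Lemma inst_list_cons t l : inst_list (t :: l) = scons t (inst_list l).
Proof. extensionality i. unfold inst_list. destruct i; reflexivity. Qed.

Definition quantifier (b : bool) : form -> form := if b then All else Ex.

Lemma fsubst_quantifier s b A : fsubst s (quantifier b A) = quantifier b (fsubst (up s) A).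
Proof. destruct b; reflexivity. Qed.

Definition free_below (N : nat) (A : form) : Prop :=
  forall s s', (forall i, i < N -> s i = s' i) -> fsubst s A = fsubst s' A.

Lemma free_below_mono N N' A : free_below N A -> N <= N' -> free_below N' A.
Proof. intros HA HN s s' Hs. apply HA. intros; apply Hs; lia. Qed.

Lemma up_agree N s s' :
  (forall i, i < N -> s i = s' i) -> forall i, i < S N -> up s i = up s' i.
Proof. intros Hs [|i] Hi; simpl; auto. rewrite Hs; auto; lia. Qed.

Lemma free_below_quantifier N b A : free_below (S N) A -> free_below N (quantifier b A).
Proof.
  intros HA s s' Hs. rewrite !fsubst_quantifier. f_equal. apply HA. apply up_agree; auto.
Qed.

Lemma free_below_quantifier_inv N b A : free_below N (quantifier b A) -> free_below (S N) A.
Proof.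
  intros HA s s' Hs.
  rewrite <- (scons_eta s), <- (scons_eta s'), <- !inst0_fsubst_up, (Hs 0) by lia.
  f_equal.
  assert (E : quantifier b (fsubst (up (fun k => s (S k))) A) =
              quantifier b (fsubst (up (fun k => s' (S k))) A)).
  { rewrite <- !fsubst_quantifier. apply HA. intros i Hi. apply Hs. lia. }
  destruct b; injection E; auto.
Qed.

Lemma free_below_exists A : exists N, free_below N A.
Proof.
  induction A as [| p ts | A1 [N1 H1] A2 [N2 H2] | A1 [N1 H1] A2 [N2 H2]
                  | A1 [N1 H1] A2 [N2 H2] | A [N H] | A [N H]].
  - exists 0. intros s s' _. reflexivity.
  - exists (S (list_max (concat (map tvars ts)))). intros s s' Hs. simpl. f_equal.
    apply map_ext_in. intros t Ht. apply tsubst_ext_tvars. intros i Hi. apply Hs.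
    enough (i <= list_max (concat (map tvars ts))) by lia.
    pose proof (proj1 (list_max_le _ _) (le_n (list_max (concat (map tvars ts))))) as Hmax.
    rewrite Forall_forall in Hmax. apply Hmax, in_concat_map. eauto.
  - exists (N1 + N2). intros s s' Hs. simpl. f_equal; [apply H1|apply H2];
      intros; apply Hs; lia.
  - exists (N1 + N2). intros s s' Hs. simpl. f_equal; [apply H1|apply H2];
      intros; apply Hs; lia.
  - exists (N1 + N2). intros s s' Hs. simpl. f_equal; [apply H1|apply H2];
      intros; apply Hs; lia.
  - exists N. apply (free_below_quantifier N true), (free_below_mono N); auto.
  - exists N. apply (free_below_quantifier N false), (free_below_mono N); auto.
Qed.

Lemma IQC_weaken A B : IQC B -> IQC (Imp A B).
Proof. intros HB. eapply r_mp; [apply ax_K | exact HB]. Qed.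

Lemma IQC_imp_trans A B C : IQC (Imp A B) -> IQC (Imp B C) -> IQC (Imp A C).
Proof.
  intros HAB HBC. eapply r_mp; [eapply r_mp; [apply (ax_S false A B C)|] | exact HAB].
  apply IQC_weaken; exact HBC.
Qed.

Lemma IQC_imp_refl A : IQC (Imp A A).
Proof.
  eapply r_mp; [eapply r_mp; [apply (ax_S false A (Imp A A) A) | apply ax_K] |].
  apply (ax_K false A A).
Qed.

Lemma IQC_or_elim A B C : IQC (Imp A C) -> IQC (Imp B C) -> IQC (Imp (Or A B) C).
Proof. intros HA HB. eapply r_mp; [eapply r_mp; [apply ax_orE | exact HA] | exact HB]. Qed.

Lemma IQC_bigOr_intro l A : In A l -> IQC (Imp A (bigOr l)).
Proof.
  induction l as [|B [|C l] IH]; intros HA; [destruct HA | |].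
  - destruct HA as [<-|[]]. apply IQC_imp_refl.
  - destruct HA as [<-|HA]; [apply ax_orI1|].
    eapply IQC_imp_trans; [apply IH; exact HA | apply ax_orI2].
Qed.

Lemma IQC_bigOr_elim l C : (forall A, In A l -> IQC (Imp A C)) -> IQC (Imp (bigOr l) C).
Proof.
  induction l as [|A [|B l] IH]; intros Hl; [apply ax_bot | apply Hl; left; auto |].
  apply IQC_or_elim; [apply Hl; left; auto|]. apply IH. intros; apply Hl; right; auto.
Qed.

Lemma IQC_bigOr_mono l l' :
  (forall A, In A l -> exists B, In B l' /\ IQC (Imp A B)) ->
  IQC (Imp (bigOr l) (bigOr l')).
Proof.
  intros Hl. apply IQC_bigOr_elim. intros A HA. destruct (Hl A HA) as [B [HB HAB]].
  eapply IQC_imp_trans; [exact HAB | apply IQC_bigOr_intro; exact HB].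
Qed.

Lemma IQC_bigOr_incl l l' : incl l l' -> IQC (Imp (bigOr l) (bigOr l')).
Proof.
  intros Hl. apply IQC_bigOr_mono. intros A HA. exists A. split; auto. apply IQC_imp_refl.
Qed.

Lemma IQC_bigOr_cons_split A l : IQC (Imp (bigOr (A :: l)) (Or A (bigOr l))).
Proof.
  apply IQC_bigOr_elim. intros B [<-|HB]; [apply ax_orI1|].
  eapply IQC_imp_trans; [apply IQC_bigOr_intro; exact HB | apply ax_orI2].
Qed.

Lemma IQC_bigOr_cons_join A l : IQC (Imp (Or A (bigOr l)) (bigOr (A :: l))).
Proof.
  apply IQC_or_elim; [apply IQC_bigOr_intro; left; auto|].
  apply IQC_bigOr_incl. intros B HB; right; auto.
Qed.

Lemma IQC_ex_mono A B : IQC (Imp A B) -> IQC (Imp (Ex A) (Ex B)).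
Proof.
  intros HAB. apply r_ex. eapply IQC_imp_trans; [exact HAB|].
  pose proof (ax_ex false (fsubst (up (fun n => tvar (S n))) B) (tvar 0)) as Hex.
  rewrite inst0_fsubst_up, fsubst_var_ext in Hex by (intros [|i]; reflexivity).
  exact Hex.
Qed.

Section IntermediateLogic.
Variable QL : form -> Prop.
Hypothesis HQL : intermediate QL.

Lemma QL_of_IQC A : IQC A -> QL A.
Proof. apply HQL. Qed.

Lemma QL_mp A B : QL (Imp A B) -> QL A -> QL B.
Proof. apply HQL. Qed.

Lemma QL_IQC_mp A B : IQC (Imp A B) -> QL A -> QL B.
Proof. intros HAB HA. eapply QL_mp; [apply QL_of_IQC; exact HAB | exact HA]. Qed.

Lemma QL_all_intro A : QL A -> QL (All A).
Proof.
  intros HA. destruct HQL as (_ & _ & _ & _ & Hall & _).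
  eapply QL_mp; [apply (Hall A (Imp Bot Bot)) | apply QL_of_IQC, ax_bot].
  eapply QL_IQC_mp; [apply ax_K | exact HA].
Qed.

Lemma QL_fsubst s A : QL A -> QL (fsubst s A).
Proof.
  destruct (free_below_exists A) as [N HN]. revert A s HN.
  induction N as [|N IH]; intros A s HN HA.
  - rewrite (HN s tvar), fsubst_var by lia. exact HA.
  - pose proof (IH (All A) (fun k => s (S k)) (free_below_quantifier N true A HN)
                   (QL_all_intro A HA)) as Hall.
    rewrite <- (scons_eta s), <- inst0_fsubst_up.
    eapply QL_IQC_mp; [apply ax_all | exact Hall].
Qed.
End IntermediateLogic.

Fixpoint amap (g : nat -> list term -> form) (A : form) : form :=
  match A with
  | Bot => Bot
  | Atom p ts => g p ts
  | And B C => And (amap g B) (amap g C)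
  | Or B C => Or (amap g B) (amap g C)
  | Imp B C => Imp (amap g B) (amap g C)
  | All B => All (amap g B)
  | Ex B => Ex (amap g B)
  end.

Lemma amap_Atom A : amap Atom A = A.
Proof. induction A; simpl; f_equal; auto. Qed.

Lemma amap_bigOr g l : amap g (bigOr l) = bigOr (map (amap g) l).
Proof. induction l as [|A [|B l] IH]; simpl in *; auto. rewrite IH; auto. Qed.

Lemma amap_psubst g s B :
  propf B -> amap g (psubst s B) = psubst (fun p n => amap g (s p n)) B.
Proof.
  unfold psubst. induction B; simpl; intros HB; try reflexivity; try tauto.
  - subst. simpl. rewrite !fsubst_var_ext; auto; intros i; simpl; f_equal; lia.
  - destruct HB. f_equal; auto.
  - destruct HB. f_equal; auto.
  - destruct HB. f_equal; auto.
Qed.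

(* Atoms occur in an L-derivation only inside substituted propositional
   variables, so any atom-wise map of it is again a substitution instance. *)
Lemma QL_amap_of_derivL QL1 QL2 g :
  intermediate QL1 -> same_prop_fragment QL1 QL2 ->
  forall D, derivL QL2 D -> QL1 (amap g D).
Proof.
  intros H1 Hsame D HD. induction HD as [s B HB HQB _ | A B _ IHAB _ IHA].
  - rewrite amap_psubst by exact HB. apply H1. apply Hsame; auto.
  - eapply QL_mp; [exact H1 | exact IHAB | exact IHA].
Qed.

Fixpoint quant (qs : list bool) (M : form) : form :=
  match qs with
  | [] => M
  | b :: qs' => quantifier b (quant qs' M)
  end.

Lemma prenex_quant A : prenex A -> exists qs M, qfree M /\ A = quant qs M.
Proof.
  induction 1 as [A HA | A _ [qs [M [HM ->]]] | A _ [qs [M [HM ->]]]].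
  - exists [], A. auto.
  - exists (true :: qs), M. auto.
  - exists (false :: qs), M. auto.
Qed.

Lemma quant_repeat_false n A : quant (repeat false n) A = exs n A.
Proof. induction n; simpl; f_equal; auto. Qed.

Lemma skipn_nth_cons (qs : list bool) k :
  k < length qs -> skipn k qs = nth k qs false :: skipn (S k) qs.
Proof.
  revert k. induction qs as [|b qs IH]; intros [|k] Hk; simpl in *; try lia; auto.
  apply IH. lia.
Qed.

Lemma free_below_quant_skipn qs M N k :
  free_below N (quant qs M) -> k <= length qs ->
  free_below (k + N) (quant (skipn k qs) M).
Proof.
  revert qs N. induction k as [|k IH]; intros [|b qs] N HN Hk; simpl in *; auto; [lia|].
  replace (S (k + N)) with (k + S N) by lia.
  apply IH; [apply (free_below_quantifier_inv N b); exact HN | lia].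
Qed.

(* [pre] lists the instances of the outermost quantifiers, outermost first,
   while [inst_list] expects the innermost bound variable first. *)
Definition prenex_inst (qs : list bool) (M : form) (pre : list term) : form :=
  fsubst (inst_list (rev pre)) (quant (skipn (length pre) qs) M).

Lemma prenex_inst_nil qs M : prenex_inst qs M [] = quant qs M.
Proof.
  apply fsubst_var_ext. intros i. unfold inst_list. simpl. f_equal. lia.
Qed.

Lemma prenex_inst_full qs M pre :
  length pre = length qs -> prenex_inst qs M pre = fsubst (inst_list (rev pre)) M.
Proof. intros Hpre. unfold prenex_inst. rewrite skipn_all2 by lia. reflexivity. Qed.

Lemma prenex_inst_snoc qs M pre t :
  prenex_inst qs M (pre ++ [t]) =
  fsubst (scons t (inst_list (rev pre))) (quant (skipn (S (length pre)) qs) M).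
Proof.
  unfold prenex_inst. rewrite length_app, rev_app_distr, Nat.add_1_r. simpl.
  rewrite inst_list_cons. reflexivity.
Qed.

Lemma prenex_inst_quantifier qs M pre :
  length pre < length qs ->
  prenex_inst qs M pre =
  quantifier (nth (length pre) qs false)
      (fsubst (up (inst_list (rev pre))) (quant (skipn (S (length pre)) qs) M)).
Proof.
  intros Hpre. unfold prenex_inst. rewrite (skipn_nth_cons qs _ Hpre). apply fsubst_quantifier.
Qed.

Lemma IQC_prenex_inst_ex qs M pre t :
  length pre < length qs -> nth (length pre) qs false = false ->
  IQC (Imp (prenex_inst qs M (pre ++ [t])) (prenex_inst qs M pre)).
Proof.
  intros Hpre Hex. rewrite prenex_inst_snoc, (prenex_inst_quantifier qs M pre Hpre), Hex.
  rewrite <- inst0_fsubst_up. apply ax_ex.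
Qed.

Lemma IQC_prenex_inst_ex_chain qs M w :
  length w <= length qs -> (forall p, p < length w -> nth p qs false = false) ->
  IQC (Imp (prenex_inst qs M w) (quant qs M)).
Proof.
  induction w as [|t w IH] using rev_ind; intros Hw Hex.
  - rewrite prenex_inst_nil. apply IQC_imp_refl.
  - rewrite length_app in Hw, Hex. simpl in Hw, Hex.
    eapply IQC_imp_trans; [apply IQC_prenex_inst_ex; [lia | apply Hex; lia] |].
    apply IH; [lia|]. intros p Hp. apply Hex. lia.
Qed.

Lemma IQC_exs_intro A ts : IQC (Imp (fsubst (inst_list ts) A) (exs (length ts) A)).
Proof.
  pose proof (IQC_prenex_inst_ex_chain (repeat false (length ts)) A (rev ts)) as Hchain.
  rewrite quant_repeat_false in Hchain. unfold prenex_inst in Hchain.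
  rewrite rev_involutive, length_rev, repeat_length in Hchain.
  rewrite skipn_all2 in Hchain by (rewrite repeat_length; lia).
  apply Hchain; [lia|]. intros p _. apply nth_repeat.
Qed.

Definition abstract_var (V : nat) : nat -> term :=
  fun i => if i =? V then tvar 0 else tvar (S i).

Definition fresh_in (V : nat) (pre : list term) : Prop :=
  forall u, In u pre -> ~ In V (tvars u).

Lemma abstract_var_inst_list N V pre i :
  N <= V -> fresh_in V pre -> i < length pre + N ->
  tsubst (abstract_var V) (inst_list (rev pre) i) =
  tsubst (fun k => tvar (S k)) (inst_list (rev pre) i).
Proof.
  intros HV Hfresh Hi. unfold inst_list. rewrite length_rev.
  destruct (i <? length pre) eqn:Hlt.
  - apply tsubst_ext_tvars. intros j Hj. unfold abstract_var.
    destruct (Nat.eqb_spec j V) as [->|]; auto. exfalso.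
    apply Nat.ltb_lt in Hlt. eapply Hfresh; [|exact Hj].
    apply in_rev, nth_In. rewrite length_rev. exact Hlt.
  - apply Nat.ltb_ge in Hlt. simpl. unfold abstract_var.
    destruct (Nat.eqb_spec (i - length pre) V); auto. lia.
Qed.

Section ShiftStep.
Variable QL : form -> Prop.
Hypothesis HQL : intermediate QL.
Hypothesis Hshift : forall C B, QL (shift_schema C B).
Variables (qs : list bool) (M : form) (N : nat).
Hypothesis HN : free_below N (quant qs M).

Lemma prenex_inst_abstract_fresh V u :
  N <= V -> length u <= length qs -> fresh_in V u ->
  fsubst (abstract_var V) (prenex_inst qs M u) = lift (prenex_inst qs M u).
Proof.
  intros HV Hu Hfresh. unfold lift, prenex_inst. rewrite !fsubst_comp.
  apply (free_below_quant_skipn qs M N (length u) HN Hu).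
  intros i Hi. apply abstract_var_inst_list with N; auto.
Qed.

Lemma prenex_inst_abstract_new V pre :
  N <= V -> length pre < length qs -> fresh_in V pre ->
  fsubst (abstract_var V) (prenex_inst qs M (pre ++ [tvar V])) =
  fsubst (up (inst_list (rev pre))) (quant (skipn (S (length pre)) qs) M).
Proof.
  intros HV Hpre Hfresh. rewrite prenex_inst_snoc, fsubst_comp.
  apply (free_below_quant_skipn qs M N (S (length pre)) HN); [lia|].
  intros [|i] Hi; simpl.
  - unfold abstract_var. rewrite Nat.eqb_refl. reflexivity.
  - apply abstract_var_inst_list with N; auto. lia.
Qed.

(* The eigenvariable [V] is abstracted, generalized, and the quantifier is
   pushed onto the first disjunct by the shift schema. *)
Lemma QL_prenex_inst_all V pre Ds :
  N <= V -> length pre < length qs -> nth (length pre) qs false = true ->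
  fresh_in V pre -> (forall u, In u Ds -> length u <= length qs /\ fresh_in V u) ->
  QL (bigOr (prenex_inst qs M (pre ++ [tvar V]) :: map (prenex_inst qs M) Ds)) ->
  QL (bigOr (prenex_inst qs M pre :: map (prenex_inst qs M) Ds)).
Proof.
  intros HV Hpre Hall Hfresh HDs H.
  apply (QL_IQC_mp QL HQL _ _ (IQC_bigOr_cons_split _ _)) in H.
  apply (QL_fsubst QL HQL (abstract_var V)) in H. simpl in H.
  assert (Hrest : fsubst (abstract_var V) (bigOr (map (prenex_inst qs M) Ds)) =
                  lift (bigOr (map (prenex_inst qs M) Ds))).
  { unfold lift. rewrite !fsubst_bigOr, !map_map. f_equal. apply map_ext_in.
    intros u Hu. destruct (HDs u Hu). apply prenex_inst_abstract_fresh; auto. }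
  rewrite prenex_inst_abstract_new, Hrest in H by auto.
  pose proof (QL_mp QL HQL _ _ (Hshift _ _) (QL_all_intro QL HQL _ H)) as Hor.
  eapply (QL_IQC_mp QL HQL); [apply IQC_bigOr_cons_join|].
  rewrite (prenex_inst_quantifier qs M pre Hpre), Hall. exact Hor.
Qed.
End ShiftStep.

(** * The Herbrand form *)

Section Skolemization.
Variable F : nat.

Definition skolem_term (pre : list term) : term := tfun (F + length pre) pre.

Fixpoint num_ex (qs : list bool) : nat :=
  match qs with
  | [] => 0
  | true :: qs' => num_ex qs'
  | false :: qs' => S (num_ex qs')
  end.

(* The branch [xs = []] is junk: it is reached only when
   [length xs <> num_ex qs]. *)
Fixpoint skolem_fill (qs : list bool) (xs pre : list term) : list term :=
  match qs with
  | [] => pre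
  | true :: qs' => skolem_fill qs' xs (pre ++ [skolem_term pre])
  | false :: qs' =>
      match xs with
      | [] => skolem_fill qs' [] pre
      | x :: xs' => skolem_fill qs' xs' (pre ++ [x])
      end
  end.

Definition inst_list_from (l : list term) (k : nat) : nat -> term :=
  fun i => if i <? length l then nth i l (tvar 0) else tvar (i - length l + k).

Definition shift_term (m : nat) : term -> term := tsubst (fun i => tvar (m + i)).

Definition rev_vars (m : nat) : list term := rev (map tvar (seq 0 m)).

(* The matrix of the Herbrand form: the existential variables become the
   bound variables [num_ex qs - 1, ..., 0] of the [exs] prefix. *)
Definition herbrand_matrix (qs : list bool) (M : form) : form :=
  fsubst (inst_list_from (rev (skolem_fill qs (rev_vars (num_ex qs)) [])) (num_ex qs)) M.

Lemma scons_inst_list_from t l k : scons t (inst_list_from l k) = inst_list_from (t :: l) k.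
Proof. extensionality i. unfold inst_list_from. destruct i; reflexivity. Qed.

Lemma up_inst_list_from l k :
  up (inst_list_from l k) =
  inst_list_from (tvar 0 :: map (tsubst (fun i => tvar (S i))) l) (S k).
Proof.
  extensionality i. unfold inst_list_from. destruct i as [|i]; simpl; auto.
  rewrite length_map. destruct (i <? length l) eqn:Hi.
  - apply Nat.ltb_lt in Hi.
    replace (S i <? S (length l)) with true by (symmetry; apply Nat.ltb_lt; lia).
    rewrite (nth_indep (map (tsubst (fun i => tvar (S i))) l) (tvar 0)
               (tsubst (fun i => tvar (S i)) (tvar 0))) by (rewrite length_map; exact Hi).
    rewrite map_nth. reflexivity.
  - apply Nat.ltb_ge in Hi.
    replace (S i <? S (length l)) with false by (symmetry; apply Nat.ltb_ge; lia).
    simpl. f_equal. lia.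
Qed.

Lemma tsubst_skolem_term s pre : tsubst s (skolem_term pre) = skolem_term (map (tsubst s) pre).
Proof. unfold skolem_term. simpl. rewrite length_map. reflexivity. Qed.

Lemma rev_vars_S m : rev_vars (S m) = tvar m :: rev_vars m.
Proof. unfold rev_vars. rewrite seq_S, map_app, rev_app_distr. reflexivity. Qed.

(* Generalized over the instances [pre] of the quantifiers already passed and
   the shift [k] of the free variables, so that the induction goes under
   binders. *)
Lemma IQC_skolem_instance qs M pre k :
  IQC (Imp (fsubst (inst_list_from (rev pre) k) (quant qs M))
           (exs (num_ex qs)
              (fsubst (inst_list_from (rev (skolem_fill qs (rev_vars (num_ex qs))
                                              (map (shift_term (num_ex qs)) pre)))
                                      (k + num_ex qs)) M))).
Proof.
  revert pre k. induction qs as [|[|] qs IH]; intros pre k; simpl.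
  - rewrite Nat.add_0_r.
    replace (map (shift_term 0) pre) with pre; [apply IQC_imp_refl|].
    rewrite <- map_id at 1. apply map_ext. intros t. symmetry. apply tsubst_var.
  - eapply IQC_imp_trans; [apply (ax_all false _ (skolem_term pre))|].
    rewrite inst0_fsubst_up, scons_inst_list_from.
    specialize (IH (pre ++ [skolem_term pre]) k).
    rewrite rev_app_distr, map_app in IH. simpl in IH.
    unfold shift_term at 2 in IH. rewrite tsubst_skolem_term in IH. exact IH.
  - apply IQC_ex_mono. rewrite up_inst_list_from.
    specialize (IH (map (tsubst (fun i => tvar (S i))) pre ++ [tvar 0]) (S k)).
    rewrite rev_app_distr in IH. simpl in IH.
    rewrite map_rev, rev_vars_S. replace (k + S (num_ex qs)) with (S (k + num_ex qs)) by lia.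
    replace (map (shift_term (S (num_ex qs))) pre ++ [tvar (num_ex qs)])
      with (map (shift_term (num_ex qs)) (map (tsubst (fun i => tvar (S i))) pre ++ [tvar 0]));
      [exact IH|].
    rewrite map_app, map_map. simpl. unfold shift_term at 2. simpl.
    rewrite Nat.add_0_r. f_equal. apply map_ext. intros t. unfold shift_term.
    rewrite tsubst_comp. simpl. f_equal. extensionality i. f_equal. lia.
Qed.

Lemma IQC_herbrand_form qs M :
  IQC (Imp (quant qs M) (exs (num_ex qs) (herbrand_matrix qs M))).
Proof.
  pose proof (IQC_skolem_instance qs M [] 0) as H. simpl in H.
  rewrite fsubst_var_ext in H; [exact H|].
  intros i. unfold inst_list_from. simpl. f_equal. lia.
Qed.

Lemma skolem_fill_map s qs xs pre :
  map (tsubst s) (skolem_fill qs xs pre) =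
  skolem_fill qs (map (tsubst s) xs) (map (tsubst s) pre).
Proof.
  revert xs pre. induction qs as [|[|] qs IH]; intros xs pre; simpl; auto.
  - rewrite IH, map_app, <- tsubst_skolem_term. reflexivity.
  - destruct xs; simpl; rewrite IH; auto. rewrite map_app. reflexivity.
Qed.

Lemma map_nth_seq {X} (l : list X) d : map (fun k => nth k l d) (seq 0 (length l)) = l.
Proof.
  induction l as [|t l IH]; simpl; auto. f_equal.
  rewrite <- seq_shift, map_map. exact IH.
Qed.

Lemma fsubst_inst_herbrand_matrix qs M ts :
  length ts = num_ex qs ->
  fsubst (inst_list ts) (herbrand_matrix qs M) =
  fsubst (inst_list (rev (skolem_fill qs (rev ts) []))) M.
Proof.
  intros Hts. unfold herbrand_matrix. rewrite fsubst_comp. f_equal. extensionality i.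
  set (L := rev (skolem_fill qs (rev_vars (num_ex qs)) [])).
  assert (HL : map (tsubst (inst_list ts)) L = rev (skolem_fill qs (rev ts) [])).
  { unfold L. rewrite map_rev, skolem_fill_map. simpl. do 2 f_equal.
    unfold rev_vars. rewrite map_rev, map_map. f_equal. rewrite <- Hts.
    rewrite <- (map_nth_seq ts (tvar 0)) at 2. apply map_ext_in.
    intros k Hk. apply in_seq in Hk. simpl. unfold inst_list.
    replace (k <? length ts) with true by (symmetry; apply Nat.ltb_lt; lia). reflexivity. }
  rewrite <- HL. unfold inst_list_from, inst_list at 2. rewrite length_map.
  destruct (i <? length L) eqn:Hi.
  - apply Nat.ltb_lt in Hi.
    rewrite (nth_indep (map _ L) _ (tsubst (inst_list ts) (tvar 0)))
      by (rewrite length_map; exact Hi).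
    rewrite map_nth. reflexivity.
  - simpl. unfold inst_list.
    replace (i - length L + num_ex qs <? length ts) with false
      by (symmetry; apply Nat.ltb_ge; lia).
    f_equal. lia.
Qed.

Lemma skolem_fill_prefix qs xs pre : exists suf, skolem_fill qs xs pre = pre ++ suf.
Proof.
  revert xs pre. induction qs as [|[|] qs IH]; intros xs pre; simpl.
  - exists []. rewrite app_nil_r. reflexivity.
  - destruct (IH xs (pre ++ [skolem_term pre])) as [suf ->].
    rewrite <- app_assoc. eauto.
  - destruct xs as [|x xs]; [apply IH|].
    destruct (IH xs (pre ++ [x])) as [suf ->]. rewrite <- app_assoc. eauto.
Qed.

Lemma skolem_fill_length qs xs pre :
  length xs = num_ex qs -> length (skolem_fill qs xs pre) = length pre + length qs.
Proof.
  revert xs pre. induction qs as [|[|] qs IH]; intros xs pre Hxs; simpl in *; [lia| |].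
  - rewrite IH by exact Hxs. rewrite length_app. simpl. lia.
  - destruct xs as [|x xs]; simpl in *; [lia|].
    rewrite IH by lia. rewrite length_app. simpl. lia.
Qed.

Lemma skolem_fill_skolem qs xs pre p :
  length xs = num_ex qs -> p < length qs -> nth p qs false = true ->
  nth (length pre + p) (skolem_fill qs xs pre) (tvar 0) =
  skolem_term (firstn (length pre + p) (skolem_fill qs xs pre)).
Proof.
  revert xs pre p. induction qs as [|[|] qs IH]; intros xs pre p Hxs Hp Hq; simpl in *; [lia| |].
  - destruct p as [|p].
    + destruct (skolem_fill_prefix qs xs (pre ++ [skolem_term pre])) as [suf ->].
      rewrite Nat.add_0_r, <- app_assoc, app_nth2, Nat.sub_diag by lia. simpl.
      rewrite firstn_app, Nat.sub_diag, firstn_all. simpl. rewrite app_nil_r. reflexivity.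
    + replace (length pre + S p) with (length (pre ++ [skolem_term pre]) + p)
        by (rewrite length_app; simpl; lia).
      apply IH; auto. lia.
  - destruct p as [|p]; [discriminate|].
    destruct xs as [|x xs]; simpl in Hxs; [lia|].
    replace (length pre + S p) with (length (pre ++ [x]) + p)
      by (rewrite length_app; simpl; lia).
    apply IH; auto; lia.
Qed.
End Skolemization.

(** * Unskolemization *)

Fixpoint subterms (t : term) : list term :=
  t :: match t with tvar _ => [] | tfun _ ts => concat (map subterms ts) end.

Fixpoint tsize (t : term) : nat :=
  match t with tvar _ => 1 | tfun _ ts => S (list_sum (map tsize ts)) end.

Lemma subterms_refl t : In t (subterms t).
Proof. destruct t; left; reflexivity. Qed.

Lemma subterms_tfun g ts s :
  In s (subterms (tfun g ts)) <-> s = tfun g ts \/ exists a, In a ts /\ In s (subterms a).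
Proof.
  simpl. rewrite in_concat_map. split; intros [H|H]; auto.
Qed.

Lemma list_sum_In l n : In n l -> n <= list_sum l.
Proof.
  induction l as [|m l IH]; simpl; intros Hn; [destruct Hn|].
  destruct Hn as [<-|Hn]; [lia|]. specialize (IH Hn). lia.
Qed.

Lemma tsize_subterm s t : In s (subterms t) -> tsize s <= tsize t.
Proof.
  induction t as [n | g ts IH] using term_nested_ind; simpl; intros Hs.
  - destruct Hs as [<-|[]]. auto.
  - apply (subterms_tfun g ts s) in Hs as [->|[a [Ha Hs]]]; auto.
    rewrite Forall_forall in IH. specialize (IH a Ha Hs).
    pose proof (list_sum_In (map tsize ts) (tsize a) (in_map _ _ _ Ha)). simpl. lia.
Qed.

Lemma tsize_subterm_arg_lt g ts a s :
  In a ts -> In s (subterms a) -> tsize s < tsize (tfun g ts).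
Proof.
  intros Ha Hs. apply tsize_subterm in Hs.
  pose proof (list_sum_In (map tsize ts) (tsize a) (in_map _ _ _ Ha)). simpl. lia.
Qed.

Definition head_below (F : nat) (t : term) : Prop :=
  match t with tvar _ => True | tfun g _ => g < F end.

Definition term_funs_below (F : nat) (t : term) : Prop :=
  forall s, In s (subterms t) -> head_below F s.

Fixpoint form_funs_below (F : nat) (A : form) : Prop :=
  match A with
  | Bot => True
  | Atom _ ts => forall t, In t ts -> term_funs_below F t
  | And B C | Or B C | Imp B C => form_funs_below F B /\ form_funs_below F C
  | All B | Ex B => form_funs_below F B
  end.

Lemma uniform_bound {X} (P : nat -> X -> Prop) (l : list X) :
  (forall n n' x, n <= n' -> P n x -> P n' x) ->
  (forall x, In x l -> exists n, P n x) -> exists n, forall x, In x l -> P n x.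
Proof.
  intros Hmono. induction l as [|x l IH]; intros Hl.
  - exists 0. intros x [].
  - destruct (Hl x (or_introl eq_refl)) as [n1 H1].
    destruct IH as [n2 H2]; [intros; apply Hl; right; auto|].
    exists (n1 + n2). intros y [<-|Hy]; eapply Hmono; [| exact H1 | | apply H2; exact Hy]; lia.
Qed.

Lemma term_funs_below_mono F F' t : F <= F' -> term_funs_below F t -> term_funs_below F' t.
Proof. intros HF Ht s Hs. specialize (Ht s Hs). destruct s; simpl in *; lia. Qed.

Lemma form_funs_below_mono F F' A : F <= F' -> form_funs_below F A -> form_funs_below F' A.
Proof.
  intros HF. induction A; simpl; try tauto.
  intros Hts t Ht. apply (term_funs_below_mono F); auto.
Qed.

Lemma term_funs_bound t : exists F, term_funs_below F t.
Proof.
  induction t as [n | g ts IH] using term_nested_ind.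
  - exists 0. intros s [<-|[]]. exact I.
  - rewrite Forall_forall in IH.
    destruct (uniform_bound term_funs_below ts term_funs_below_mono IH) as [F HF].
    exists (S (F + g)). intros s Hs.
    apply (subterms_tfun g ts s) in Hs as [->|[a [Ha Hs]]]; [simpl; lia|].
    apply (term_funs_below_mono F (S (F + g)) a); [lia | exact (HF a Ha) | exact Hs].
Qed.

Lemma form_funs_bound A : exists F, form_funs_below F A.
Proof.
  induction A as [| p ts | A1 [F1 H1] A2 [F2 H2] | A1 [F1 H1] A2 [F2 H2]
                  | A1 [F1 H1] A2 [F2 H2] | A IH | A IH]; simpl; auto.
  3-5: exists (F1 + F2);
    split; [apply (form_funs_below_mono F1) | apply (form_funs_below_mono F2)]; auto; lia.
  - exists 0. exact I.
  - apply uniform_bound; [apply term_funs_below_mono|]. intros t _. apply term_funs_bound.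
Qed.

Fixpoint index_of {X} (L : list X) (x : X) : nat :=
  match L with
  | [] => 0
  | a :: L' => if excluded_middle_informative (a = x) then 0 else S (index_of L' x)
  end.

Lemma index_of_nth {X} (L : list X) t d : In t L -> nth (index_of L t) L d = t.
Proof.
  induction L as [|a L IH]; simpl; intros Ht; [destruct Ht|].
  destruct (excluded_middle_informative (a = t)) as [|Hne]; auto.
  destruct Ht as [->|Ht]; [contradiction | auto].
Qed.

Lemma index_of_inj {X} (L : list X) a b :
  In a L -> In b L -> index_of L a = index_of L b -> a = b.
Proof.
  intros Ha Hb Hab. rewrite <- (index_of_nth L a a), <- (index_of_nth L b a), Hab; auto.
Qed.

Section Unskolem.
Variables (F base : nat) (L : list term).

(* The function symbols [>= F] are the Skolem functions. *)
Fixpoint unskolem (t : term) : term :=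
  match t with
  | tvar i => tvar i
  | tfun g ts =>
      if F <=? g then tvar (base + index_of L (tfun g ts)) else tfun g (map unskolem ts)
  end.

Lemma unskolem_skolem g ts : F <= g -> unskolem (tfun g ts) = tvar (base + index_of L (tfun g ts)).
Proof. intros Hg. simpl. apply Nat.leb_le in Hg. rewrite Hg. reflexivity. Qed.

Lemma tvars_unskolem u V :
  In V (tvars (unskolem u)) ->
  In V (tvars u) \/ exists s, In s (subterms u) /\ V = base + index_of L s.
Proof.
  induction u as [n | g ts IH] using term_nested_ind; simpl; intros HV; auto.
  destruct (F <=? g).
  - simpl in HV. destruct HV as [<-|[]]. right. exists (tfun g ts). simpl. auto.
  - simpl in HV. rewrite map_map in HV. apply in_concat_map in HV as [a [Ha HV]].
    rewrite Forall_forall in IH. destruct (IH a Ha HV) as [Hv|[s [Hs ->]]].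
    + left. apply in_concat_map. eauto.
    + right. exists s. split; auto. apply subterms_tfun. eauto.
Qed.

Lemma unskolem_tsubst u s :
  term_funs_below F u -> unskolem (tsubst s u) = tsubst (fun i => unskolem (s i)) u.
Proof.
  induction u as [n | g ts IH] using term_nested_ind; intros Hu; simpl; auto.
  assert (Hg : g < F) by (apply (Hu (tfun g ts)), subterms_refl).
  apply Nat.leb_gt in Hg. rewrite Hg. f_equal. rewrite map_map. apply map_ext_in.
  intros a Ha. rewrite Forall_forall in IH. apply IH; auto.
  intros s' Hs'. apply Hu, subterms_tfun. eauto.
Qed.

Lemma amap_unskolem_fsubst M s :
  qfree M -> form_funs_below F M ->
  amap (fun p ts => Atom p (map unskolem ts)) (fsubst s M) = fsubst (fun i => unskolem (s i)) M.
Proof.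
  induction M; simpl; intros HM HF; try tauto; try reflexivity.
  - f_equal. rewrite map_map. apply map_ext_in. intros t Ht. apply unskolem_tsubst; auto.
  - destruct HM, HF. f_equal; auto.
  - destruct HM, HF. f_equal; auto.
  - destruct HM, HF. f_equal; auto.
Qed.

Lemma unskolem_inst_list l i : unskolem (inst_list l i) = inst_list (map unskolem l) i.
Proof.
  unfold inst_list. rewrite length_map. destruct (i <? length l); [|reflexivity].
  change (tvar 0) with (unskolem (tvar 0)) at 2. symmetry. apply map_nth.
Qed.
End Unskolem.

(** * Reassembling a prenex formula *)

Lemma list_sum_map_le {X} (s : list X) (g h : X -> nat) :
  (forall x, In x s -> g x <= h x) -> list_sum (map g s) <= list_sum (map h s).
Proof.
  induction s as [|x s IH]; simpl; intros Hgh; auto.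
  pose proof (Hgh x (or_introl eq_refl)). enough (list_sum (map g s) <= list_sum (map h s)) by lia.
  apply IH. auto.
Qed.

Lemma list_sum_map_lt {X} (s : list X) (g h : X -> nat) :
  (forall x, In x s -> g x <= h x) -> (exists x, In x s /\ g x < h x) ->
  list_sum (map g s) < list_sum (map h s).
Proof.
  induction s as [|y s IH]; simpl; intros Hgh [x [Hx Hlt]]; [destruct Hx|].
  destruct Hx as [<-|Hx].
  - pose proof (list_sum_map_le s g h ltac:(auto)). lia.
  - pose proof (Hgh y (or_introl eq_refl)). enough (list_sum (map g s) < list_sum (map h s)) by lia.
    apply IH; eauto.
Qed.

Lemma exists_max {X} (l : list X) (P : X -> Prop) (f : X -> nat) :
  (exists x, In x l /\ P x) ->
  exists x, In x l /\ P x /\ forall y, In y l -> P y -> f y <= f x.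
Proof.
  induction l as [|a l IH]; simpl; intros [x [Hx Px]]; [destruct Hx|].
  destruct (classic (exists x, In x l /\ P x)) as [Hl|Hl].
  - destruct (IH Hl) as [m [Hm [Pm Hmax]]].
    destruct (classic (P a /\ f m < f a)) as [[Pa Hlt]|Ha].
    + exists a. repeat split; auto. intros y [->|Hy] Py; auto.
      specialize (Hmax y Hy Py). lia.
    + exists m. repeat split; auto. intros y [->|Hy] Py; auto.
      destruct (Nat.le_gt_cases (f y) (f m)); auto. exfalso; auto.
  - destruct Hx as [->|Hx]; [|exfalso; eauto].
    exists x. repeat split; auto. intros y [->|Hy] Py; auto. exfalso; eauto.
Qed.

Lemma In_firstn_In {X} (x : X) k l : In x (firstn k l) -> In x l.
Proof. intros Hx. rewrite <- (firstn_skipn k l). apply in_or_app. auto. Qed.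

Section Reassembly.
Variable QL : form -> Prop.
Hypothesis HQL : intermediate QL.
Hypothesis Hshift : forall C B, QL (shift_schema C B).
Variables (qs : list bool) (M : form) (N F : nat) (vecs : list (list term)).
Hypothesis HN : free_below N (quant qs M).
Hypothesis vecs_length : forall v, In v vecs -> length v = length qs.
Hypothesis vecs_skolem : forall v, In v vecs -> forall p, p < length qs ->
  nth p qs false = true -> nth p v (tvar 0) = skolem_term F (firstn p v).

Definition herbrand_terms : list term := concat (map subterms (concat vecs)).

Definition fresh_base : nat := S (list_max (concat (map tvars herbrand_terms)) + N).

Definition skolem_var (S0 : term) : nat := fresh_base + index_of herbrand_terms S0.

Definition unskolem_herbrand : term -> term := unskolem F fresh_base herbrand_terms.

(* A reassembly state is a list of prefixes of the instance vectors [vecs],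
   the prefix [w] standing for the disjunct [state_disjunct w]. *)
Definition herbrand_prefix (w : list term) : Prop :=
  exists v, In v vecs /\ w = firstn (length w) v.

Definition state_disjunct (w : list term) : form :=
  prenex_inst qs M (map unskolem_herbrand w).

Definition state_size (s : list (list term)) : nat := list_sum (map (@length term) s).

Definition pop_if (P : list term -> Prop) (w : list term) : list term :=
  if excluded_middle_informative (P w) then removelast w else w.

Definition ends_ex (w : list term) : Prop := w <> [] /\ nth (length w - 1) qs false = false.

Lemma herbrand_prefix_length w : herbrand_prefix w -> length w <= length qs.
Proof.
  intros [v [Hv Hw]]. rewrite <- (vecs_length v Hv), Hw, length_firstn. lia.
Qed.

Lemma herbrand_prefix_skolem w p :
  herbrand_prefix w -> p < length w -> nth p qs false = true ->
  nth p w (tvar 0) = skolem_term F (firstn p w).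
Proof.
  intros Hw Hp Hq. pose proof (herbrand_prefix_length w Hw). destruct Hw as [v [Hv Hw]].
  rewrite Hw, nth_firstn, firstn_firstn, Nat.min_l by lia.
  replace (p <? length w) with true by (symmetry; apply Nat.ltb_lt; exact Hp).
  apply vecs_skolem; auto. lia.
Qed.

Lemma herbrand_prefix_snoc_skolem pre t :
  herbrand_prefix (pre ++ [t]) -> nth (length pre) qs false = true -> t = skolem_term F pre.
Proof.
  intros Hpre Hq. pose proof (herbrand_prefix_skolem _ (length pre) Hpre) as Hsk.
  rewrite length_app, nth_middle, firstn_app, Nat.sub_diag, firstn_all, app_nil_r in Hsk.
  simpl in Hsk. apply Hsk; auto. lia.
Qed.

Lemma herbrand_prefix_subterm w t s :
  herbrand_prefix w -> In t w -> In s (subterms t) -> In s herbrand_terms.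
Proof.
  intros [v [Hv Hw]] Ht Hs. apply in_concat_map. exists t. split; auto.
  apply in_concat. exists v. split; auto. rewrite Hw in Ht. eapply In_firstn_In; eauto.
Qed.

Lemma tvars_herbrand_terms_lt t i : In t herbrand_terms -> In i (tvars t) -> i < fresh_base.
Proof.
  intros Ht Hi. unfold fresh_base.
  pose proof (proj1 (list_max_le _ _) (le_n (list_max (concat (map tvars herbrand_terms)))))
    as Hmax.
  rewrite Forall_forall in Hmax. enough (i <= list_max (concat (map tvars herbrand_terms))) by lia.
  apply Hmax, in_concat_map. eauto.
Qed.

Lemma herbrand_prefix_removelast w : herbrand_prefix w -> herbrand_prefix (removelast w).
Proof.
  induction w as [|t w _] using rev_ind; [auto|]. rewrite removelast_last.
  intros [v [Hv Hw]]. exists v. split; auto.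
  rewrite length_app in Hw. simpl in Hw.
  apply (f_equal (firstn (length w))) in Hw.
  rewrite firstn_firstn, Nat.min_l, firstn_app, Nat.sub_diag, firstn_all in Hw by lia.
  rewrite app_nil_r in Hw. exact Hw.
Qed.

Lemma herbrand_prefix_pop_if P w : herbrand_prefix w -> herbrand_prefix (pop_if P w).
Proof.
  unfold pop_if. destruct excluded_middle_informative; auto using herbrand_prefix_removelast.
Qed.

Lemma state_size_pop_if_lt P s :
  (exists w, In w s /\ P w /\ w <> []) -> state_size (map (pop_if P) s) < state_size s.
Proof.
  intros [w [Hw [Pw Hne]]]. unfold state_size. rewrite map_map. apply list_sum_map_lt.
  - intros x _. unfold pop_if. destruct excluded_middle_informative; auto.
    rewrite removelast_firstn_len, length_firstn. lia.
  - exists w. split; auto. unfold pop_if. destruct excluded_middle_informative; [|contradiction].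
    rewrite removelast_firstn_len, length_firstn. destruct w; [contradiction|]. simpl. lia.
Qed.

Lemma state_disjunct_nil : state_disjunct [] = quant qs M.
Proof. apply prenex_inst_nil. Qed.

Lemma state_disjunct_herbrand ts :
  qfree M -> form_funs_below F M -> length ts = num_ex qs ->
  amap (fun p us => Atom p (map unskolem_herbrand us))
       (fsubst (inst_list ts) (herbrand_matrix F qs M)) =
  state_disjunct (skolem_fill F qs (rev ts) []).
Proof.
  intros HM HF Hts. unfold state_disjunct, unskolem_herbrand.
  rewrite fsubst_inst_herbrand_matrix, amap_unskolem_fsubst, prenex_inst_full; auto.
  - rewrite <- map_rev. f_equal. extensionality i. apply unskolem_inst_list.
  - rewrite length_map, skolem_fill_length; [reflexivity | rewrite length_rev; exact Hts].
Qed.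

Lemma IQC_state_disjunct_pop_ex w :
  herbrand_prefix w -> IQC (Imp (state_disjunct w) (state_disjunct (pop_if ends_ex w))).
Proof.
  intros Hw. unfold pop_if. destruct excluded_middle_informative as [[Hne Hex]|];
    [|apply IQC_imp_refl].
  destruct (exists_last Hne) as [pre [t ->]]. rewrite removelast_last.
  pose proof (herbrand_prefix_length _ Hw) as Hlen. rewrite length_app in Hlen, Hex. simpl in *.
  unfold state_disjunct. rewrite map_app. simpl.
  apply IQC_prenex_inst_ex; rewrite length_map; [lia|].
  replace (length pre) with (length pre + 1 - 1) by lia. exact Hex.
Qed.

(* A Skolem term is a proper subterm of every later entry of its vector, so
   if it has maximal size among the last entries of the state, its variable
   occurs only as the last entry of its own prefix. *)
Lemma skolem_var_occurrence pre S0 w m :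
  herbrand_prefix (pre ++ [S0]) -> nth (length pre) qs false = true ->
  herbrand_prefix w -> w <> [] -> nth (length w - 1) qs false = true ->
  tsize (last w (tvar 0)) <= tsize S0 -> m < length w ->
  In (skolem_var S0) (tvars (unskolem_herbrand (nth m w (tvar 0)))) ->
  w = pre ++ [S0] /\ m = length pre.
Proof.
  intros Hpre Hpreq Hw Hne Hwq Hsize Hm HV.
  destruct (exists_last Hne) as [pre' [top ->]].
  rewrite last_last in Hsize. rewrite length_app in Hm, Hwq. simpl in Hm, Hwq.
  replace (length pre' + 1 - 1) with (length pre') in Hwq by lia.
  pose proof (herbrand_prefix_snoc_skolem _ _ Hw Hwq) as Htop.
  pose proof (herbrand_prefix_snoc_skolem _ _ Hpre Hpreq) as HS0.
  assert (HS0in : In S0 herbrand_terms).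
  { apply (herbrand_prefix_subterm _ S0 S0 Hpre); [apply in_or_app; simpl; auto|].
    apply subterms_refl. }
  assert (Hnth : In (nth m (pre' ++ [top]) (tvar 0)) (pre' ++ [top]))
    by (apply nth_In; rewrite length_app; simpl; lia).
  apply tvars_unskolem in HV as [HV | [s [Hs Hidx]]].
  - apply tvars_herbrand_terms_lt in HV; [unfold skolem_var in *; lia|].
    apply (herbrand_prefix_subterm _ _ _ Hw Hnth), subterms_refl.
  - assert (s = S0) as ->.
    { apply (index_of_inj herbrand_terms); [apply (herbrand_prefix_subterm _ _ _ Hw Hnth Hs)
                                          | auto | unfold skolem_var in *; lia]. }
    rewrite Htop in Hsize. unfold skolem_term in *.
    destruct (Nat.lt_ge_cases m (length pre')) as [Hlt|Hge].
    + exfalso. rewrite app_nth1 in Hs by exact Hlt.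
      pose proof (tsize_subterm_arg_lt (F + length pre') pre' _ _ (nth_In _ _ Hlt) Hs). lia.
    + replace m with (length pre') in * by lia. rewrite nth_middle, Htop in Hs.
      apply subterms_tfun in Hs as [Heq | [a [Ha Hs]]].
      * rewrite HS0 in Heq. injection Heq as _ ->. rewrite Htop, <- HS0. auto.
      * exfalso. pose proof (tsize_subterm_arg_lt (F + length pre') _ _ _ Ha Hs). lia.
Qed.

Lemma fresh_in_map_unskolem_herbrand V u :
  (forall m, m < length u -> ~ In V (tvars (unskolem_herbrand (nth m u (tvar 0))))) ->
  fresh_in V (map unskolem_herbrand u).
Proof.
  intros Hu x Hx. apply in_map_iff in Hx as [t [<- Ht]].
  apply (In_nth _ _ (tvar 0)) in Ht as [m [Hm <-]]. auto.
Qed.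

Lemma QL_state_generalize s pre S0 :
  (forall w, In w s -> herbrand_prefix w) -> In (pre ++ [S0]) s ->
  nth (length pre) qs false = true ->
  (forall w m, In w s -> m < length w ->
     In (skolem_var S0) (tvars (unskolem_herbrand (nth m w (tvar 0)))) ->
     w = pre ++ [S0] /\ m = length pre) ->
  QL (bigOr (map state_disjunct s)) ->
  QL (bigOr (map state_disjunct (map (pop_if (fun w => w = pre ++ [S0])) s))).
Proof.
  intros Hs Hwm Hpreq Hocc H.
  set (others := filter (fun w => if excluded_middle_informative (w = pre ++ [S0])
                                   then false else true) s).
  assert (Hothers : forall w, In w others <-> In w s /\ w <> pre ++ [S0]).
  { intros w. unfold others. rewrite filter_In.
    destruct excluded_middle_informative; intuition congruence. }
  assert (Hlen : length pre < length qs).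
  { pose proof (herbrand_prefix_length _ (Hs _ Hwm)) as Hl. rewrite length_app in Hl.
    simpl in Hl. lia. }
  assert (HS0 : unskolem_herbrand S0 = tvar (skolem_var S0)).
  { rewrite (herbrand_prefix_snoc_skolem pre S0 (Hs _ Hwm) Hpreq).
    apply unskolem_skolem. lia. }
  assert (Hgen : QL (bigOr (prenex_inst qs M (map unskolem_herbrand pre ++ [tvar (skolem_var S0)])
                            :: map (prenex_inst qs M) (map (map unskolem_herbrand) others)))).
  { eapply (QL_IQC_mp QL HQL); [|exact H]. apply IQC_bigOr_incl. intros A HA.
    apply in_map_iff in HA as [w [<- Hw]].
    destruct (classic (w = pre ++ [S0])) as [->|Hne].
    - left. unfold state_disjunct. rewrite map_app. simpl. rewrite HS0. reflexivity.
    - right. rewrite map_map. apply in_map, Hothers. auto. }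
  apply (QL_prenex_inst_all QL HQL Hshift qs M N HN (skolem_var S0)) in Hgen.
  - eapply (QL_IQC_mp QL HQL); [|exact Hgen]. apply IQC_bigOr_incl. intros A [<-|HA].
    + change (prenex_inst qs M (map unskolem_herbrand pre)) with (state_disjunct pre).
      apply in_map, in_map_iff. exists (pre ++ [S0]). split; auto. unfold pop_if.
      destruct excluded_middle_informative; [|contradiction]. apply removelast_last.
    + rewrite map_map in HA. apply in_map_iff in HA as [w [<- Hw]].
      apply Hothers in Hw as [Hw Hw'].
      change (prenex_inst qs M (map unskolem_herbrand w)) with (state_disjunct w).
      apply in_map, in_map_iff. exists w. split; auto.
      unfold pop_if. destruct excluded_middle_informative; [contradiction | reflexivity].
  - unfold skolem_var, fresh_base. lia.
  - rewrite length_map. exact Hlen.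
  - rewrite length_map. exact Hpreq.
  - apply fresh_in_map_unskolem_herbrand. intros m Hm HV.
    rewrite <- (app_nth1 pre [S0] (tvar 0) Hm) in HV.
    destruct (Hocc _ m Hwm ltac:(rewrite length_app; simpl; lia) HV) as [_ ->]. lia.
  - intros u Hu. apply in_map_iff in Hu as [w [<- Hw]].
    apply Hothers in Hw as [Hw Hw']. split.
    + rewrite length_map. apply herbrand_prefix_length; auto.
    + apply fresh_in_map_unskolem_herbrand. intros m Hm HV. apply Hw'.
      apply (Hocc w m); auto.
Qed.

Lemma QL_state_pop_max s wm :
  (forall w, In w s -> herbrand_prefix w) -> In wm s -> wm <> [] ->
  (forall w, In w s -> w <> [] -> nth (length w - 1) qs false = true) ->
  (forall w, In w s -> w <> [] -> tsize (last w (tvar 0)) <= tsize (last wm (tvar 0))) ->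
  QL (bigOr (map state_disjunct s)) ->
  QL (bigOr (map state_disjunct (map (pop_if (fun w => w = wm)) s))).
Proof.
  intros Hs Hwm Hne Hall Hmax.
  destruct (exists_last Hne) as [pre [S0 ->]].
  assert (Hpreq : nth (length pre) qs false = true).
  { pose proof (Hall _ Hwm Hne) as Hq. rewrite length_app in Hq. simpl in Hq.
    replace (length pre + 1 - 1) with (length pre) in Hq by lia. exact Hq. }
  apply QL_state_generalize; auto.
  intros w m Hw Hm HV.
  assert (Hwne : w <> []) by (intros ->; simpl in Hm; lia).
  apply skolem_var_occurrence; auto.
  rewrite <- (last_last pre S0 (tvar 0)). auto.
Qed.

Lemma QL_reassemble s :
  (forall w, In w s -> herbrand_prefix w) -> s <> [] ->
  QL (bigOr (map state_disjunct s)) -> QL (quant qs M).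
Proof.
  remember (state_size s) as n eqn:Hn. revert s Hn.
  induction n as [n IH] using lt_wf_ind. intros s -> Hs Hne H.
  assert (Hstep : forall P, (exists w, In w s /\ P w /\ w <> []) ->
                    QL (bigOr (map state_disjunct (map (pop_if P) s))) -> QL (quant qs M)).
  { intros P Hprogress HP. apply (IH _ (state_size_pop_if_lt P s Hprogress) _ eq_refl); auto.
    - intros w' Hw'. apply in_map_iff in Hw' as [w [<- Hw]]. apply herbrand_prefix_pop_if; auto.
    - destruct s; [contradiction | discriminate]. }
  destruct (classic (exists w, In w s /\ ends_ex w)) as [[w [Hw Hex]] | Hnoex].
  - apply (Hstep ends_ex); [exists w; split; [|split]; auto; apply Hex|].
    eapply (QL_IQC_mp QL HQL); [|exact H]. apply IQC_bigOr_mono. intros A HA.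
    apply in_map_iff in HA as [w' [<- Hw']]. exists (state_disjunct (pop_if ends_ex w')).
    split; [apply in_map, in_map; auto | apply IQC_state_disjunct_pop_ex; auto].
  - destruct (classic (exists w, In w s /\ w <> [])) as [Hsome | Hnone].
    + destruct (exists_max s (fun w => w <> []) (fun w => tsize (last w (tvar 0))) Hsome)
        as [wm [Hwm [Hwmne Hmax]]].
      apply (Hstep (fun w => w = wm)); [exists wm; auto|].
      apply QL_state_pop_max; auto.
      intros w Hw Hwne. destruct (nth (length w - 1) qs false) eqn:Hq; auto.
      exfalso. apply Hnoex. exists w. split; [|split]; auto.
    + eapply (QL_IQC_mp QL HQL); [|exact H]. apply IQC_bigOr_elim. intros A HA.
      apply in_map_iff in HA as [w [<- Hw]].
      destruct (classic (w = [])) as [->|Hwne].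
      * rewrite state_disjunct_nil. apply IQC_imp_refl.
      * exfalso. apply Hnone. eauto.
Qed.
End Reassembly.

Lemma existential_conservative QL1 QL2 :
  intermediate QL1 -> same_prop_fragment QL1 QL2 -> herbrand_ex QL2 ->
  forall n A, qfree A -> QL2 (exs n A) -> QL1 (exs n A).
Proof.
  intros H1 Hsame Hh n A HA H2.
  destruct (Hh n A HA H2) as [tss [_ [Hlen HD]]].
  pose proof (QL_amap_of_derivL QL1 QL2 Atom H1 Hsame _ HD) as HD1.
  rewrite amap_Atom in HD1.
  eapply (QL_IQC_mp QL1 H1); [|exact HD1]. apply IQC_bigOr_elim. intros B HB.
  apply in_map_iff in HB as [ts [<- Hts]]. rewrite Forall_forall in Hlen.
  rewrite <- (Hlen ts Hts). apply IQC_exs_intro.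
Qed.

Lemma prenex_conservative QL1 QL2 :
  intermediate QL1 -> intermediate QL2 -> same_prop_fragment QL1 QL2 -> herbrand_ex QL2 ->
  (forall C B, QL1 (shift_schema C B)) ->
  forall qs M, qfree M -> QL2 (quant qs M) -> QL1 (quant qs M).
Proof.
  intros H1 H2 Hsame Hh Hshift qs M HM HA.
  destruct (free_below_exists (quant qs M)) as [N HN].
  destruct (form_funs_bound M) as [F HF].
  pose proof (QL_IQC_mp QL2 H2 _ _ (IQC_herbrand_form F qs M) HA) as Hherbrand.
  destruct (Hh _ _ (qfree_fsubst M _ HM) Hherbrand) as [tss [Hne [Hlen HD]]].
  rewrite Forall_forall in Hlen.
  set (vecs := map (fun ts => skolem_fill F qs (rev ts) []) tss).
  assert (vecs_length : forall v, In v vecs -> length v = length qs).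
  { intros v Hv. apply in_map_iff in Hv as [ts [<- Hts]].
    apply skolem_fill_length. rewrite length_rev. auto. }
  assert (vecs_skolem : forall v, In v vecs -> forall p, p < length qs ->
            nth p qs false = true -> nth p v (tvar 0) = skolem_term F (firstn p v)).
  { intros v Hv p Hp Hq. apply in_map_iff in Hv as [ts [<- Hts]].
    apply (skolem_fill_skolem F qs (rev ts) [] p); auto. rewrite length_rev. auto. }
  apply (QL_reassemble QL1 H1 Hshift qs M N F vecs HN vecs_length vecs_skolem vecs).
  - intros v Hv. exists v. split; auto. symmetry. apply firstn_all.
  - unfold vecs. destruct tss; [contradiction | discriminate].
  - pose proof (QL_amap_of_derivL QL1 QL2
                   (fun p us => Atom p (map (unskolem_herbrand N F vecs) us)) H1 Hsame _ HD)
      as HD1.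
    rewrite amap_bigOr, map_map in HD1. unfold vecs. rewrite map_map.
    erewrite map_ext_in; [exact HD1|]. intros ts Hts. symmetry.
    apply state_disjunct_herbrand; auto.
Qed.

Theorem mainTheorem17 (QL1 QL2 : form -> Prop) :
  intermediate QL1 -> intermediate QL2 ->
  (forall A, QL1 A -> QL2 A) ->
  same_prop_fragment QL1 QL2 ->
  herbrand_ex QL2 ->
  (forall A, existential A -> (QL1 A <-> QL2 A)) /\
  ((forall C B, QL1 (shift_schema C B)) ->
   forall A, prenex A -> (QL1 A <-> QL2 A)).
Proof.
  intros H1 H2 H12 Hsame Hh. split.
  - intros A [n [A' [HA' ->]]]. split; [apply H12|].
    apply existential_conservative; auto.
  - intros Hshift A HA. destruct (prenex_quant A HA) as [qs [M [HM ->]]].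
    split; [apply H12|]. apply prenex_conservative; auto.
Qed.
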